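(* Let $\mathbb{S}=(\mathsf{S},\mu,\eta)$ be a Cartesian $k$-differential monad on a Cartesian $k$-differential category $\mathbb{X}$ with differential combinator $\mathsf{D}$. Then: (i) The Kleisli category $\mathsf{KL}(\mathbb{S})$, with the Cartesian left $k$-linear structure given by: terminal object and products of objects as in $\mathbb{X}$, projections $\llbracket\pi_j\rrbracket=\eta_{A_j}\circ\pi_j$, pairing $\llbracket\langle f_1,\dots,f_n\rangle\rrbracket=\omega^{-1}_{B_1,\dots,B_n}\circ\langle\llbracket f_1\rrbracket,\dots,\llbracket f_n\rrbracket\rangle$, and $k$-module structure on $\mathsf{KL}(\mathbb{S})(A,B)=\mathbb{X}(A,\mathsf{S}(B))$ inherited from $\mathbb{X}$, is a Cartesian $k$-differential category with differential combinator $\mathsf{D}_\mathbb{S}$ defined on a Kleisli map $\llbracket f\rrbracket:A\to\mathsf{S}(B)$ by $\llbracket\mathsf{D}_\mathbb{S}[f]\rrbracket:=\mathsf{D}[\llbracket f\rrbracket]:A\times A\to\mathsf{S}(B)$. (ii) A map $f$ of $\mathsf{KL}(\mathbb{S})$ is $\mathsf{D}_\mathbb{S}$-linear if and only if $\llbracket f\rrbracket$ is $\mathsf{D}$-linear in $\mathbb{X}$. (iii) $\mathsf{L}_\mathbb{S}:\mathbb{X}\to\mathsf{KL}(\mathbb{S})$ is a strict Cartesian $k$-differential functor and $\mathsf{R}_\mathbb{S}:\mathsf{KL}(\mathbb{S})\to\mathbb{X}$ is a strong Cartesian $k$-differential functor.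
   Context: Fix a commutative semiring $k$. A left $k$-linear category is a category $\mathbb{X}$ in which each hom-set $\mathbb{X}(A,B)$ is a $k$-module (scalar multiplication $r\cdot f$, addition $+$, zero $0$) such that precomposition is $k$-linear: $(r\cdot f+s\cdot g)\circ x=r\cdot(f\circ x)+s\cdot(g\circ x)$. A map $f$ is $k$-linear if $f\circ(r\cdot x+s\cdot y)=r\cdot(f\circ x)+s\cdot(f\circ y)$ for all suitable $x,y$ and $r,s\in k$. A Cartesian left $k$-linear category is a left $k$-linear category with finite products (terminal object $\ast$, projections $\pi_j:A_1\times\cdots\times A_n\to A_j$, pairing $\langle-,\dots,-\rangle$) in which all projections are $k$-linear. A Cartesian $k$-differential category is a Cartesian left $k$-linear category equipped with a differential combinator $\mathsf{D}$ assigning to each $f:A\to B$ a map $\mathsf{D}[f]:A\times A\to B$ such that: [CD.1] $\mathsf{D}[r\cdot f+s\cdot g]=r\cdot\mathsf{D}[f]+s\cdot\mathsf{D}[g]$; [CD.2] $\mathsf{D}[f]\circ\langle\pi_1,r\cdot\pi_2+s\cdot\pi_3\rangle=r\cdot(\mathsf{D}[f]\circ\langle\pi_1,\pi_2\rangle)+s\cdot(\mathsf{D}[f]\circ\langle\pi_1,\pi_3\rangle)$ (as maps $A\times A\times A\to B$); [CD.3] $\mathsf{D}[1_A]=\pi_2$ and, for $\pi_j:A_1\times\cdots\times A_n\to A_j$, $\mathsf{D}[\pi_j]=\pi_{n+j}$; [CD.4] $\mathsf{D}[\langle f_1,\dots,f_n\rangle]=\langle\mathsf{D}[f_1],\dots,\mathsf{D}[f_n]\rangle$;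 [CD.5] $\mathsf{D}[g\circ f]=\mathsf{D}[g]\circ\langle f\circ\pi_1,\mathsf{D}[f]\rangle$; [CD.6] $\mathsf{D}[\mathsf{D}[f]]\circ\langle\pi_1,0,0,\pi_2\rangle=\mathsf{D}[f]$; [CD.7] $\mathsf{D}[\mathsf{D}[f]]\circ\langle\pi_1,\pi_2,\pi_3,\pi_4\rangle=\mathsf{D}[\mathsf{D}[f]]\circ\langle\pi_1,\pi_3,\pi_2,\pi_4\rangle$ (identifying $(A\times A)\times(A\times A)$ with $A\times A\times A\times A$). A map $f$ is $\mathsf{D}$-linear if $\mathsf{D}[f]=f\circ\pi_2$. For Cartesian left $k$-linear categories $\mathbb{X},\mathbb{Y}$, a strong Cartesian $k$-linear functor is a functor $\mathsf{F}:\mathbb{X}\to\mathbb{Y}$ such that $\mathsf{F}(\ast)\to\ast$ is an isomorphism, the canonical maps $\omega_{A_1,\dots,A_n}=\langle\mathsf{F}(\pi_1),\dots,\mathsf{F}(\pi_n)\rangle:\mathsf{F}(A_1\times\cdots\times A_n)\to\mathsf{F}(A_1)\times\cdots\times\mathsf{F}(A_n)$ are isomorphisms, and $\mathsf{F}(r\cdot f+s\cdot g)=r\cdot\mathsf{F}(f)+s\cdot\mathsf{F}(g)$. It is strict if moreover $\omega$ is the identity. For Cartesian $k$-differential categories, a strong Cartesian $k$-differential functor is a strong Cartesian $k$-linear functor with $\mathsf{D}[\mathsf{F}(f)]=\mathsf{F}(\mathsf{D}[f])\circ\omega^{-1}_{A,A}$ for all $f:A\to B$; a strict Cartesian $k$-differential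 functor is a strict Cartesian $k$-linear functor with $\mathsf{D}[\mathsf{F}(f)]=\mathsf{F}(\mathsf{D}[f])$. A Cartesian $k$-differential monad on a Cartesian $k$-differential category $\mathbb{X}$ is a monad $\mathbb{S}=(\mathsf{S},\mu,\eta)$ on $\mathbb{X}$ such that $\mathsf{S}$ is a strong Cartesian $k$-differential functor and every $\eta_A$ and $\mu_A$ is $\mathsf{D}$-linear. Kleisli category notation: $\mathsf{KL}(\mathbb{S})$ has the objects of $\mathbb{X}$ and a map $f:A\to B$ in it is a map $\llbracket f\rrbracket:A\to\mathsf{S}(B)$ in $\mathbb{X}$; identities are $\llbracket 1_A\rrbracket=\eta_A$ and composition is $\llbracket g\circ f\rrbracket=\mu_C\circ\mathsf{S}(\llbracket g\rrbracket)\circ\llbracket f\rrbracket$. The functor $\mathsf{L}_\mathbb{S}:\mathbb{X}\to\mathsf{KL}(\mathbb{S})$ is identity on objects with $\llbracket\mathsf{L}_\mathbb{S}(f)\rrbracket=\eta_B\circ f$; the functor $\mathsf{R}_\mathbb{S}:\mathsf{KL}(\mathbb{S})\to\mathbb{X}$ is $\mathsf{R}_\mathbb{S}(A)=\mathsf{S}(A)$, $\mathsf{R}_\mathbb{S}(f)=\mu_B\circ\mathsf{S}(\llbracket f\rrbracket)$. *)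

From mathcomp Require Import all_boot all_algebra.
Set Implicit Arguments.
Unset Strict Implicit.
Unset Printing Implicit Defensive.
Import GRing.Theory.
Local Open Scope ring_scope.

Record CDCData (k : comPzSemiRingType) := {
  c_ob : Type;
  c_hom : c_ob -> c_ob -> Type;
  c_comp : forall A B E, c_hom B E -> c_hom A B -> c_hom A E;
  c_id : forall A, c_hom A A;
  c_add : forall A B, c_hom A B -> c_hom A B -> c_hom A B;
  c_zero : forall A B, c_hom A B;
  c_scal : forall A B, k -> c_hom A B -> c_hom A B;
  c_term : c_ob;
  c_prod : c_ob -> c_ob -> c_ob;
  c_p1 : forall A B, c_hom (c_prod A B) A;
  c_p2 : forall A B, c_hom (c_prod A B) B;
  c_pair : forall E A B, c_hom E A -> c_hom E B -> c_hom E (c_prod A B);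
  c_D : forall A B, c_hom A B -> c_hom (c_prod A A) B }.

Arguments c_ob {k} c.
Arguments c_hom {k c} _ _.
Arguments c_comp {k c A B E} _ _.
Arguments c_id {k c} A.
Arguments c_add {k c A B} _ _.
Arguments c_zero {k c} A B.
Arguments c_scal {k c A B} _ _.
Arguments c_term {k} c.
Arguments c_prod {k c} _ _.
Arguments c_p1 {k c} A B.
Arguments c_p2 {k c} A B.
Arguments c_pair {k c E A B} _ _.
Arguments c_D {k c A B} _.

Section Preds.
Variable k : comPzSemiRingType.
Variable C : CDCData k.
Local Notation ob := (c_ob C).
Local Notation hom := (@c_hom k C).

Definition lc (A B : ob) (r : k) (f : hom A B) (s : k) (g : hom A B) : hom A B :=
  c_add (c_scal r f) (c_scal s g).

Definition is_category : Prop :=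
  (forall (A B E F : ob) (h : hom E F) (g : hom B E) (f : hom A B),
      c_comp h (c_comp g f) = c_comp (c_comp h g) f) /\
  (forall (A B : ob) (f : hom A B), c_comp (c_id B) f = f) /\
  (forall (A B : ob) (f : hom A B), c_comp f (c_id A) = f).

Definition homs_are_kmodules : Prop :=
  forall A B : ob,
  (forall f g h : hom A B, c_add f (c_add g h) = c_add (c_add f g) h) /\
  (forall f g : hom A B, c_add f g = c_add g f) /\
  (forall f : hom A B, c_add (c_zero A B) f = f) /\
  (forall (r s : k) (f : hom A B), c_scal (r * s) f = c_scal r (c_scal s f)) /\
  (forall f : hom A B, c_scal 1 f = f) /\
  (forall (r : k) (f g : hom A B), c_scal r (c_add f g) = c_add (c_scal r f) (c_scal r g)) /\
  (forall (r s : k) (f : hom A B), c_scal (r + s) f = c_add (c_scal r f) (c_scal s f)) /\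
  (forall f : hom A B, c_scal 0 f = c_zero A B) /\
  (forall r : k, c_scal r (c_zero A B) = c_zero A B).

Definition precomp_linear : Prop :=
  forall (A B E : ob) (f g : hom B E) (x : hom A B) (r s : k),
    c_comp (lc r f s g) x = lc r (c_comp f x) s (c_comp g x).

Definition is_left_klinear_category : Prop :=
  is_category /\ homs_are_kmodules /\ precomp_linear.

Definition is_klinear (A B : ob) (f : hom A B) : Prop :=
  forall (E : ob) (x y : hom E A) (r s : k),
    c_comp f (lc r x s y) = lc r (c_comp f x) s (c_comp f y).

Definition is_terminal : Prop :=
  forall A : ob, inhabited (hom A (c_term C)) /\
                 forall f g : hom A (c_term C), f = g.

Definition is_product : Prop :=
  forall (E A B : ob),
  (forall (f : hom E A) (g : hom E B),
      c_comp (c_p1 A B) (c_pair f g) = f /\ c_comp (c_p2 A B) (c_pair f g) = g) /\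
  (forall h : hom E (c_prod A B),
      c_pair (c_comp (c_p1 A B) h) (c_comp (c_p2 A B) h) = h).

Definition is_cartesian_left_klinear : Prop :=
  is_left_klinear_category /\ is_terminal /\ is_product /\
  (forall A B : ob, is_klinear (c_p1 A B) /\ is_klinear (c_p2 A B)).

(** The differential combinator axioms. Triple products are A x (A x A),
    quadruple products are (A x A) x (A x A). *)
Definition CD1 : Prop :=
  forall (A B : ob) (r s : k) (f g : hom A B),
    c_D (lc r f s g) = lc r (c_D f) s (c_D g).

Definition CD2 : Prop :=
  forall (A B : ob) (f : hom A B) (r s : k),
  let pi1 := c_p1 A (c_prod A A) in
  let pi2 := c_comp (c_p1 A A) (c_p2 A (c_prod A A)) in
  let pi3 := c_comp (c_p2 A A) (c_p2 A (c_prod A A)) in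
  c_comp (c_D f) (c_pair pi1 (lc r pi2 s pi3)) =
  lc r (c_comp (c_D f) (c_pair pi1 pi2)) s (c_comp (c_D f) (c_pair pi1 pi3)).

Definition CD3 : Prop :=
  (forall A : ob, c_D (c_id A) = c_p2 A A) /\
  (forall A B : ob,
     c_D (c_p1 A B) = c_comp (c_p1 A B) (c_p2 (c_prod A B) (c_prod A B)) /\
     c_D (c_p2 A B) = c_comp (c_p2 A B) (c_p2 (c_prod A B) (c_prod A B))).

Definition CD4 : Prop :=
  forall (E A B : ob) (f : hom E A) (g : hom E B),
    c_D (c_pair f g) = c_pair (c_D f) (c_D g).

Definition CD5 : Prop :=
  forall (A B E : ob) (f : hom A B) (g : hom B E),
    c_D (c_comp g f) = c_comp (c_D g) (c_pair (c_comp f (c_p1 A A)) (c_D f)).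

Definition CD6 : Prop :=
  forall (A B : ob) (f : hom A B),
    c_comp (c_D (c_D f))
      (c_pair (c_pair (c_p1 A A) (c_zero _ A)) (c_pair (c_zero _ A) (c_p2 A A)))
    = c_D f.

Definition CD7 : Prop :=
  forall (A B : ob) (f : hom A B),
  let AA := c_prod A A in
  let q1 := c_comp (c_p1 A A) (c_p1 AA AA) in
  let q2 := c_comp (c_p2 A A) (c_p1 AA AA) in
  let q3 := c_comp (c_p1 A A) (c_p2 AA AA) in
  let q4 := c_comp (c_p2 A A) (c_p2 AA AA) in
  c_comp (c_D (c_D f)) (c_pair (c_pair q1 q2) (c_pair q3 q4)) =
  c_comp (c_D (c_D f)) (c_pair (c_pair q1 q3) (c_pair q2 q4)).

Definition is_CDC : Prop :=
  is_cartesian_left_klinear /\ CD1 /\ CD2 /\ CD3 /\ CD4 /\ CD5 /\ CD6 /\ CD7.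

Definition D_linear (A B : ob) (f : hom A B) : Prop :=
  c_D f = c_comp f (c_p2 A A).

End Preds.

Arguments is_category {k} C.
Arguments is_CDC {k} C.
Arguments is_cartesian_left_klinear {k} C.

Record FunctorData (k : comPzSemiRingType) (C1 C2 : CDCData k) := {
  f_ob : c_ob C1 -> c_ob C2;
  f_map : forall A B : c_ob C1, @c_hom k C1 A B -> @c_hom k C2 (f_ob A) (f_ob B) }.

Arguments f_ob {k C1 C2} f _.
Arguments f_map {k C1 C2} f {A B} _.

Definition castdom (k : comPzSemiRingType) (C : CDCData k) (A A' B : c_ob C)
  (e : A = A') (f : c_hom A B) : c_hom A' B :=
  eq_rect A (fun X => c_hom X B) f A' e.

Section Functors.
Variable k : comPzSemiRingType.
Variables C1 C2 : CDCData k.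
Variable F : FunctorData C1 C2.

Definition is_functor : Prop :=
  (forall A : c_ob C1, f_map F (c_id A) = c_id (f_ob F A)) /\
  (forall (A B E : c_ob C1) (g : c_hom B E) (f : c_hom A B),
      f_map F (c_comp g f) = c_comp (f_map F g) (f_map F f)).

Definition functor_klinear : Prop :=
  forall (A B : c_ob C1) (r s : k) (f g : c_hom A B),
    f_map F (lc r f s g) = lc r (f_map F f) s (f_map F g).

Definition omega (A B : c_ob C1) :
  c_hom (f_ob F (c_prod A B)) (c_prod (f_ob F A) (f_ob F B)) :=
  c_pair (f_map F (c_p1 A B)) (f_map F (c_p2 A B)).

Definition strong_CkL_with
  (winv : forall A B : c_ob C1,
      c_hom (c_prod (f_ob F A) (f_ob F B)) (f_ob F (c_prod A B))) : Prop :=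
  is_functor /\
  (exists (u : c_hom (f_ob F (c_term C1)) (c_term C2))
          (v : c_hom (c_term C2) (f_ob F (c_term C1))),
      c_comp v u = c_id _ /\ c_comp u v = c_id _) /\
  (forall A B : c_ob C1,
      c_comp (omega A B) (winv A B) = c_id _ /\
      c_comp (winv A B) (omega A B) = c_id _) /\
  functor_klinear.

Definition strong_CD_with
  (winv : forall A B : c_ob C1,
      c_hom (c_prod (f_ob F A) (f_ob F B)) (f_ob F (c_prod A B))) : Prop :=
  strong_CkL_with winv /\
  (forall (A B : c_ob C1) (f : c_hom A B),
      c_D (f_map F f) = c_comp (f_map F (c_D f)) (winv A A)).

Definition is_strong_CDFunctor : Prop :=
  exists winv, strong_CD_with winv.

(** strict: F preserves terminal object and products on the nose and
    omega is the identity (after transport along these equalities). *)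
Definition is_strict_CDFunctor : Prop :=
  is_functor /\ functor_klinear /\
  exists (eT : f_ob F (c_term C1) = c_term C2)
         (eP : forall A B : c_ob C1,
               f_ob F (c_prod A B) = c_prod (f_ob F A) (f_ob F B)),
    (forall A B : c_ob C1, castdom (eP A B) (omega A B) = c_id _) /\
    (forall (A B : c_ob C1) (f : c_hom A B),
        c_D (f_map F f) = castdom (eP A A) (f_map F (c_D f))).

End Functors.

Arguments is_strong_CDFunctor {k C1 C2} F.
Arguments is_strict_CDFunctor {k C1 C2} F.

Record MonadData (k : comPzSemiRingType) (C : CDCData k) := {
  m_S : FunctorData C C;
  m_eta : forall A : c_ob C, c_hom A (f_ob m_S A);
  m_mu : forall A : c_ob C, c_hom (f_ob m_S (f_ob m_S A)) (f_ob m_S A);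
  (* chosen inverse of omega_{A,B} : S(A x B) -> S(A) x S(B) *)
  m_winv : forall A B : c_ob C,
      c_hom (c_prod (f_ob m_S A) (f_ob m_S B)) (f_ob m_S (c_prod A B)) }.

Arguments m_S {k C} m.
Arguments m_eta {k C} m A.
Arguments m_mu {k C} m A.
Arguments m_winv {k C} m A B.

Section Monads.
Variable k : comPzSemiRingType.
Variable C : CDCData k.
Variable M : MonadData C.
Local Notation S := (f_ob (m_S M)).
Local Notation Sm := (f_map (m_S M)).
Local Notation eta := (m_eta M).
Local Notation mu := (m_mu M).

Definition is_monad : Prop :=
  is_functor (m_S M) /\
  (forall (A B : c_ob C) (f : c_hom A B), c_comp (Sm f) (eta A) = c_comp (eta B) f) /\
  (forall (A B : c_ob C) (f : c_hom A B),
      c_comp (Sm f) (mu A) = c_comp (mu B) (Sm (Sm f))) /\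
  (forall A : c_ob C, c_comp (mu A) (Sm (eta A)) = c_id _) /\
  (forall A : c_ob C, c_comp (mu A) (eta (S A)) = c_id _) /\
  (forall A : c_ob C, c_comp (mu A) (mu (S A)) = c_comp (mu A) (Sm (mu A))).

Definition is_CDMonad : Prop :=
  is_monad /\ strong_CD_with (m_winv M) /\
  (forall A : c_ob C, D_linear (eta A)) /\
  (forall A : c_ob C, D_linear (mu A)).

Definition Kleisli : CDCData k := {|
  c_ob := c_ob C;
  c_hom := fun A B => c_hom A (S B);
  c_comp := fun A B E g f => c_comp (c_comp (mu E) (Sm g)) f;
  c_id := fun A => eta A;
  c_add := fun A B f g => c_add f g;
  c_zero := fun A B => c_zero A (S B);
  c_scal := fun A B r f => c_scal r f;
  c_term := c_term C;
  c_prod := fun A B => c_prod A B;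
  c_p1 := fun A B => c_comp (eta A) (c_p1 A B);
  c_p2 := fun A B => c_comp (eta B) (c_p2 A B);
  c_pair := fun E A B f g => c_comp (m_winv M A B) (c_pair f g);
  c_D := fun A B f => c_D f |}.

Definition LS : FunctorData C Kleisli :=
  @Build_FunctorData k C Kleisli (fun A => A)
    (fun (A B : c_ob C) (f : @c_hom k C A B) =>
       (c_comp (eta B) f : @c_hom k Kleisli A B)).

Definition RS : FunctorData Kleisli C :=
  @Build_FunctorData k Kleisli C (fun A => S A)
    (fun (A B : c_ob C) (f : @c_hom k Kleisli A B) =>
       c_comp (mu B) (Sm (f : @c_hom k C A (S B)))).

End Monads.

Arguments is_CDMonad {k C} M.
Arguments Kleisli {k C} M.
Arguments LS {k C} M.
Arguments RS {k C} M.

From Pilot Require Import Defs.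
From mathcomp Require Import all_boot all_algebra.
Set Implicit Arguments. Unset Strict Implicit. Unset Printing Implicit Defensive.

(** Everything rests
    on two observations:
    - D-linear maps (D[g] = g o pi2) are k-linear and commute with D under
      post-composition: D[g o f] = g o D[f]; in particular eta, mu, S(pi_j),
      omega and its inverse are D-linear, so all the Kleisli structure maps
      (composition, projections, pairing) are post-compositions of D-linear
      maps with ordinary ones;
    - the Kleisli extension g# = mu o S(g) satisfies the usual monad laws. *)

Section CartesianCategory.
Variables (k : comPzSemiRingType) (C : CDCData k).
Hypotheses (Hcat : is_category C) (Hprod : is_product C).
Local Notation ob := (c_ob C).
Local Notation hom := (@c_hom k C).

Lemma comp_assoc (A B E F : ob) (h : hom E F) (g : hom B E) (f : hom A B) :
  c_comp h (c_comp g f) = c_comp (c_comp h g) f.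
Proof. by case: Hcat => ->. Qed.

Lemma comp_idl (A B : ob) (f : hom A B) : c_comp (c_id B) f = f.
Proof. by case: Hcat => _ []. Qed.

Lemma comp_idr (A B : ob) (f : hom A B) : c_comp f (c_id A) = f.
Proof. by case: Hcat => _ []. Qed.

Lemma p1_pair (E A B : ob) (f : hom E A) (g : hom E B) :
  c_comp (c_p1 A B) (c_pair f g) = f.
Proof. by case: (Hprod E A B) => /(_ f g) []. Qed.

Lemma p2_pair (E A B : ob) (f : hom E A) (g : hom E B) :
  c_comp (c_p2 A B) (c_pair f g) = g.
Proof. by case: (Hprod E A B) => /(_ f g) []. Qed.

Lemma pair_eta (E A B : ob) (h : hom E (c_prod A B)) :
  c_pair (c_comp (c_p1 A B) h) (c_comp (c_p2 A B) h) = h.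
Proof. by case: (Hprod E A B). Qed.

Lemma pair_ext (E A B : ob) (h h' : hom E (c_prod A B)) :
  c_comp (c_p1 A B) h = c_comp (c_p1 A B) h' ->
  c_comp (c_p2 A B) h = c_comp (c_p2 A B) h' -> h = h'.
Proof. by move=> e1 e2; rewrite -(pair_eta h) -(pair_eta h') e1 e2. Qed.

Lemma pair_comp (E' E A B : ob) (f : hom E A) (g : hom E B) (h : hom E' E) :
  c_comp (c_pair f g) h = c_pair (c_comp f h) (c_comp g h).
Proof. by rewrite -[LHS]pair_eta !comp_assoc p1_pair p2_pair. Qed.

Lemma pair_proj (A B : ob) : c_pair (c_p1 A B) (c_p2 A B) = c_id (c_prod A B).
Proof. by rewrite -{1}(pair_eta (c_id _)) !comp_idr. Qed.

End CartesianCategory.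

Section DifferentialCategory.
Variables (k : comPzSemiRingType) (C : CDCData k).
Hypothesis HC : is_CDC C.
Local Notation ob := (c_ob C).
Local Notation hom := (@c_hom k C).

Lemma CDC_category : is_category C.
Proof. by case: HC => [[[]]]. Qed.

Lemma CDC_kmodules : homs_are_kmodules C.
Proof. by case: HC => [[[_ []]]]. Qed.

Lemma CDC_terminal : is_terminal C.
Proof. by case: HC => [[_ []]]. Qed.

Lemma CDC_product : is_product C.
Proof. by case: HC => [[_ [_ []]]]. Qed.

Lemma CDC_CD1 : CD1 C. Proof. by case: HC => _ []. Qed.
Lemma CDC_CD2 : CD2 C. Proof. by case: HC => _ [_ []]. Qed.
Lemma CDC_CD3 : CD3 C. Proof. by case: HC => _ [_ [_ []]]. Qed.
Lemma CDC_CD6 : CD6 C. Proof. by case: HC => _ [_ [_ [_ [_ [_ []]]]]]. Qed.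
Lemma CDC_CD7 : CD7 C. Proof. by case: HC => _ [_ [_ [_ [_ [_ []]]]]]. Qed.

Local Notation comp_assoc := (comp_assoc CDC_category).
Local Notation comp_idl := (comp_idl CDC_category).
Local Notation comp_idr := (comp_idr CDC_category).
Local Notation p1_pair := (p1_pair CDC_product).
Local Notation p2_pair := (p2_pair CDC_product).
Local Notation pair_comp := (pair_comp CDC_category CDC_product).
Local Notation pair_proj := (pair_proj CDC_category CDC_product).

Lemma lc_comp (A B E : ob) (f g : hom B E) (x : hom A B) (r s : k) :
  c_comp (lc r f s g) x = lc r (c_comp f x) s (c_comp g x).
Proof. by case: HC => [[[_ [_ ->]]]]. Qed.

Lemma lc00 (A B : ob) (f g : hom A B) : lc 0%R f 0%R g = c_zero A B.
Proof.
case: (CDC_kmodules A B) => _ [_ [add0 [_ [_ [_ [_ [scal0 _]]]]]]].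
by rewrite /lc !scal0 add0.
Qed.

Lemma D_id (A : ob) : c_D (c_id A) = c_p2 A A.
Proof. by case: CDC_CD3. Qed.

Lemma D_p1 (A B : ob) :
  c_D (c_p1 A B) = c_comp (c_p1 A B) (c_p2 (c_prod A B) (c_prod A B)).
Proof. by case: CDC_CD3 => _ /(_ A B) []. Qed.

Lemma D_p2 (A B : ob) :
  c_D (c_p2 A B) = c_comp (c_p2 A B) (c_p2 (c_prod A B) (c_prod A B)).
Proof. by case: CDC_CD3 => _ /(_ A B) []. Qed.

Lemma D_pair (E A B : ob) (f : hom E A) (g : hom E B) :
  c_D (c_pair f g) = c_pair (c_D f) (c_D g).
Proof. by case: HC => _ [_ [_ [_ [->]]]]. Qed.

Lemma D_comp (A B E : ob) (f : hom A B) (g : hom B E) :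
  c_D (c_comp g f) = c_comp (c_D g) (c_pair (c_comp f (c_p1 A A)) (c_D f)).
Proof. by case: HC => _ [_ [_ [_ [_ [->]]]]]. Qed.

Lemma klinear_zero (A B E : ob) (f : hom A B) :
  is_klinear f -> c_comp f (c_zero E A) = c_zero E B.
Proof. by move=> /(_ E (c_zero E A) (c_zero E A) 0%R 0%R); rewrite !lc00. Qed.

(** Every D-linear map is k-linear: evaluate CD.2 at <x, <x, y>>. *)
Lemma D_linear_klinear (A B : ob) (f : hom A B) : D_linear f -> is_klinear f.
Proof.
move=> Df E x y r s.
have := CDC_CD2 f r s => /= /(congr1 (fun z => c_comp z (c_pair x (c_pair x y)))).
rewrite !lc_comp -!comp_assoc !pair_comp !lc_comp -!comp_assoc.
by rewrite !(p1_pair, p2_pair) Df -!comp_assoc !p2_pair.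
Qed.

Lemma D_comp_linear (A B E : ob) (f : hom A B) (g : hom B E) :
  D_linear g -> c_D (c_comp g f) = c_comp g (c_D f).
Proof. by move=> Dg; rewrite D_comp Dg -comp_assoc p2_pair. Qed.

Lemma D_linear_pair (E A B : ob) (f : hom E A) (g : hom E B) :
  D_linear f -> D_linear g -> D_linear (c_pair f g).
Proof. by move=> Df Dg; rewrite /D_linear D_pair Df Dg pair_comp. Qed.

Lemma D_linear_inverse (A B : ob) (f : hom A B) (g : hom B A) :
  c_comp g f = c_id A -> c_comp f g = c_id B -> D_linear f -> D_linear g.
Proof.
move=> gf fg Df.
have Dg_ff : c_comp (c_D g) (c_pair (c_comp f (c_p1 A A)) (c_comp f (c_p2 A A)))
             = c_p2 A A by rewrite -Df -D_comp gf D_id.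
have ff_gg : c_comp (c_pair (c_comp f (c_p1 A A)) (c_comp f (c_p2 A A)))
                    (c_pair (c_comp g (c_p1 B B)) (c_comp g (c_p2 B B))) = c_id _.
  by rewrite pair_comp -!comp_assoc p1_pair p2_pair !comp_assoc fg !comp_idl pair_proj.
by rewrite /D_linear -[LHS]comp_idr -ff_gg comp_assoc Dg_ff p2_pair.
Qed.

End DifferentialCategory.

Section DifferentialMonad.
Variables (k : comPzSemiRingType) (C : CDCData k) (M : MonadData C).
Hypotheses (HC : is_CDC C) (HM : is_CDMonad M).
Local Notation ob := (c_ob C).
Local Notation hom := (@c_hom k C).
Local Notation S := (f_ob (m_S M)).
Local Notation Sm := (f_map (m_S M)).
Local Notation eta := (m_eta M).
Local Notation mu := (m_mu M).
Local Notation winv := (m_winv M).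
Local Notation omega := (omega (m_S M)).
Local Notation comp_assoc := (comp_assoc (CDC_category HC)).
Local Notation comp_idl := (comp_idl (CDC_category HC)).
Local Notation comp_idr := (comp_idr (CDC_category HC)).
Local Notation p1_pair := (p1_pair (CDC_product HC)).
Local Notation p2_pair := (p2_pair (CDC_product HC)).
Local Notation pair_ext := (pair_ext (CDC_product HC)).
Local Notation pair_comp := (pair_comp (CDC_category HC) (CDC_product HC)).
Local Notation pair_proj := (pair_proj (CDC_category HC) (CDC_product HC)).

Local Notation "g ^#" := (c_comp (mu _) (Sm g)) (at level 2, format "g ^#").

Lemma S_comp (A B E : ob) (g : hom B E) (f : hom A B) :
  Sm (c_comp g f) = c_comp (Sm g) (Sm f).
Proof. by case: HM => [[[]]]. Qed.

Lemma eta_nat (A B : ob) (f : hom A B) : c_comp (Sm f) (eta A) = c_comp (eta B) f.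
Proof. by case: HM => [[_ []]]. Qed.

Lemma mu_nat (A B : ob) (f : hom A B) :
  c_comp (Sm f) (mu A) = c_comp (mu B) (Sm (Sm f)).
Proof. by case: HM => [[_ [_ []]]]. Qed.

Lemma mu_S_eta (A : ob) : c_comp (mu A) (Sm (eta A)) = c_id (S A).
Proof. by case: HM => [[_ [_ [_ []]]]]. Qed.

Lemma mu_eta (A : ob) : c_comp (mu A) (eta (S A)) = c_id (S A).
Proof. by case: HM => [[_ [_ [_ [_ []]]]]]. Qed.

Lemma mu_assoc (A : ob) : c_comp (mu A) (mu (S A)) = c_comp (mu A) (Sm (mu A)).
Proof. by case: HM => [[_ [_ [_ [_ []]]]]]. Qed.

Lemma S_terminal : exists (u : hom (S (c_term C)) (c_term C))
                          (v : hom (c_term C) (S (c_term C))),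
  c_comp v u = c_id _ /\ c_comp u v = c_id _.
Proof. by case: HM => _ [[[_ []]]]. Qed.

Lemma omega_winv (A B : ob) : c_comp (omega A B) (winv A B) = c_id _.
Proof. by case: HM => _ [[[_ [_ [/(_ A B) []]]]]]. Qed.

Lemma winv_omega (A B : ob) : c_comp (winv A B) (omega A B) = c_id _.
Proof. by case: HM => _ [[[_ [_ [/(_ A B) []]]]]]. Qed.

Lemma S_klinear : functor_klinear (m_S M).
Proof. by case: HM => _ [[[_ [_ []]]]]. Qed.

Lemma S_D (A B : ob) (f : hom A B) : c_D (Sm f) = c_comp (Sm (c_D f)) (winv A A).
Proof. by case: HM => _ [[_ ->]]. Qed.

Lemma eta_D_linear (A : ob) : D_linear (eta A).
Proof. by case: HM => _ [_ []]. Qed.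

Lemma mu_D_linear (A : ob) : D_linear (mu A).
Proof. by case: HM => _ [_ []]. Qed.

Lemma eta_klinear (A : ob) : is_klinear (eta A).
Proof. exact: D_linear_klinear (eta_D_linear A). Qed.

Lemma mu_klinear (A : ob) : is_klinear (mu A).
Proof. exact: D_linear_klinear (mu_D_linear A). Qed.

Lemma ext_eta_comp (A B : ob) (g : hom A B) : (c_comp (eta B) g)^# = Sm g.
Proof. by rewrite S_comp comp_assoc mu_S_eta comp_idl. Qed.

Lemma ext_comp_eta (A A' B : ob) (g : hom A (S B)) (h : hom A' A) :
  c_comp g^# (c_comp (eta A) h) = c_comp g h.
Proof. by rewrite comp_assoc -(comp_assoc (mu B)) eta_nat comp_assoc mu_eta comp_idl. Qed.

Lemma ext_ext (A B E : ob) (g : hom A (S B)) (h : hom B (S E)) :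
  (c_comp h^# g)^# = c_comp h^# g^#.
Proof.
rewrite !S_comp !comp_assoc -mu_assoc -(comp_assoc (mu E) (mu _)) -mu_nat.
by rewrite !comp_assoc.
Qed.

Lemma ext_pure_comp (A A' B : ob) (g : hom A B) (f : hom A' A) :
  c_comp (c_comp (eta B) g)^# (c_comp (eta A) f) = c_comp (eta B) (c_comp g f).
Proof. by rewrite ext_comp_eta -comp_assoc. Qed.

Lemma eta_lc (E A : ob) (r s : k) (a b : hom E A) :
  lc r (c_comp (eta A) a) s (c_comp (eta A) b) = c_comp (eta A) (lc r a s b).
Proof. by rewrite eta_klinear. Qed.

Lemma S_p1_winv (A B : ob) : c_comp (Sm (c_p1 A B)) (winv A B) = c_p1 (S A) (S B).
Proof. by rewrite -(p1_pair (Sm (c_p1 A B)) (Sm (c_p2 A B))) -comp_assoc omega_winv comp_idr. Qed.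

Lemma S_p2_winv (A B : ob) : c_comp (Sm (c_p2 A B)) (winv A B) = c_p2 (S A) (S B).
Proof. by rewrite -(p2_pair (Sm (c_p1 A B)) (Sm (c_p2 A B))) -comp_assoc omega_winv comp_idr. Qed.

Lemma winv_eta_pair (E A B : ob) (a : hom E A) (b : hom E B) :
  c_comp (winv A B) (c_pair (c_comp (eta A) a) (c_comp (eta B) b))
  = c_comp (eta _) (c_pair a b).
Proof.
have -> : c_pair (c_comp (eta A) a) (c_comp (eta B) b) =
          c_comp (omega A B) (c_comp (eta _) (c_pair a b)).
  apply: pair_ext; rewrite ?p1_pair ?p2_pair comp_assoc /omega comp_assoc.
    by rewrite p1_pair eta_nat -comp_assoc p1_pair.
  by rewrite p2_pair eta_nat -comp_assoc p2_pair.
by rewrite comp_assoc winv_omega comp_idl.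
Qed.

Lemma S_p1_D_linear (A B : ob) : D_linear (Sm (c_p1 A B)).
Proof. by rewrite /D_linear S_D (D_p1 HC) S_comp -comp_assoc S_p2_winv. Qed.

Lemma S_p2_D_linear (A B : ob) : D_linear (Sm (c_p2 A B)).
Proof. by rewrite /D_linear S_D (D_p2 HC) S_comp -comp_assoc S_p2_winv. Qed.

Lemma winv_D_linear (A B : ob) : D_linear (winv A B).
Proof.
apply: (D_linear_inverse HC (winv_omega A B) (omega_winv A B)).
exact: (D_linear_pair HC (S_p1_D_linear A B) (S_p2_D_linear A B)).
Qed.


Local Notation KL := (Kleisli M).

Lemma KL_lc (A B : ob) (r s : k) (f g : @c_hom k KL A B) :
  @lc k KL A B r f s g = @lc k C A (S B) r f s g.
Proof. by []. Qed.

Lemma KL_category : is_category KL.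
Proof.
split; [|split] => [A B E F h g f | A B f | A B f] /=.
- by rewrite ext_ext comp_assoc.
- by rewrite mu_S_eta comp_idl.
- by rewrite -comp_assoc eta_nat comp_assoc mu_eta comp_idl.
Qed.

Lemma KL_kmodules : homs_are_kmodules KL.
Proof. by move=> A B; exact: (CDC_kmodules HC A (S B)). Qed.

Lemma KL_precomp_linear : precomp_linear KL.
Proof.
move=> A B E f g x r s; rewrite !KL_lc /=.
by rewrite S_klinear mu_klinear (lc_comp HC).
Qed.

(** The terminal object of X stays terminal since S(1) is isomorphic to 1. *)
Lemma KL_terminal : is_terminal KL.
Proof.
move=> A; have [[t] uniq_term] := CDC_terminal HC A.
have [u [v [vu _]]] := S_terminal.
split; first by constructor; exact: (c_comp v t).
move=> f g /=.
rewrite -(comp_idl f) -(comp_idl g) -vu -(comp_assoc v u f) -(comp_assoc v u g).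
by rewrite (uniq_term (c_comp u f) (c_comp u g)).
Qed.

(** Kleisli projections and pairing: S(pi_j) o winv = pi_j and winv o omega = 1. *)
Lemma KL_product : is_product KL.
Proof.
move=> E A B; split=> [f g | h] /=; rewrite !ext_eta_comp.
  by rewrite comp_assoc S_p1_winv p1_pair comp_assoc S_p2_winv p2_pair.
by rewrite -pair_comp comp_assoc winv_omega comp_idl.
Qed.

(** Kleisli projections act as S(pi_j), which is D-linear hence k-linear. *)
Lemma KL_proj_klinear (A B : ob) :
  is_klinear (@c_p1 k KL A B) /\ is_klinear (@c_p2 k KL A B).
Proof.
split=> E x y r s; rewrite !KL_lc /= !ext_eta_comp.
  exact: (D_linear_klinear HC (S_p1_D_linear A B)).
exact: (D_linear_klinear HC (S_p2_D_linear A B)).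
Qed.

Lemma KL_cartesian : is_cartesian_left_klinear KL.
Proof.
split; first by split; [exact: KL_category | split; [exact: KL_kmodules | exact: KL_precomp_linear]].
by split; [exact: KL_terminal | split; [exact: KL_product | exact: KL_proj_klinear]].
Qed.

(** D_S is D on the underlying maps, and the k-module structure is shared. *)
Lemma KL_CD1 : CD1 KL.
Proof. by move=> A B r s f g; exact: (CDC_CD1 HC r s f g). Qed.

(** The Kleisli projections and pairings in CD.2 are pure (of the form eta o h)
    with h the corresponding maps of X, so CD.2 reduces to CD.2 in X. *)
Lemma KL_CD2 : CD2 KL.
Proof.
move=> A B f r s; cbn -[lc]; rewrite !KL_lc; cbn -[lc].
rewrite !ext_pure_comp eta_lc !winv_eta_pair !ext_comp_eta.
exact: (CDC_CD2 HC f r s).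
Qed.

(** eta is D-linear and commutes with D, so Kleisli projections obey CD.3. *)
Lemma KL_CD3 : CD3 KL.
Proof.
split=> [A | A B] /=; first exact: eta_D_linear.
by rewrite !ext_pure_comp !(D_comp_linear HC _ (eta_D_linear _)) (D_p1 HC) (D_p2 HC).
Qed.

(** Kleisli pairing is post-composition with the D-linear map winv. *)
Lemma KL_CD4 : CD4 KL.
Proof.
move=> E A B f g /=.
by rewrite (D_comp_linear HC _ (winv_D_linear _ _)) (D_pair HC).
Qed.

(** Chain rule: mu is D-linear and D[S g] = S(D g) o winv. *)
Lemma KL_CD5 : CD5 KL.
Proof.
move=> A B E f g /=.
rewrite ext_comp_eta (D_comp HC) (D_comp_linear HC _ (mu_D_linear _)) S_D.
by rewrite -!comp_assoc.
Qed.

(** The Kleisli zero map is eta o 0, since eta is k-linear. *)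
Lemma KL_CD6 : CD6 KL.
Proof.
move=> A B f /=.
rewrite -(klinear_zero HC (c_prod A A) (@eta_klinear A)) !winv_eta_pair ext_comp_eta.
exact: (CDC_CD6 HC f).
Qed.

(** As for CD.2, the reindexing maps are pure and CD.7 reduces to X. *)
Lemma KL_CD7 : CD7 KL.
Proof.
move=> A B f /=.
rewrite !ext_pure_comp !winv_eta_pair !ext_comp_eta.
exact: (CDC_CD7 HC f).
Qed.

Lemma KL_CDC : is_CDC KL.
Proof.
split; first exact: KL_cartesian.
split; first exact: KL_CD1. split; first exact: KL_CD2.
split; first exact: KL_CD3. split; first exact: KL_CD4.
split; first exact: KL_CD5. split; [exact: KL_CD6 | exact: KL_CD7].
Qed.

Lemma KL_D_linear (A B : ob) (f : @c_hom k KL A B) :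
  @D_linear k KL A B f <-> @D_linear k C A (S B) f.
Proof. by rewrite /D_linear /= ext_comp_eta. Qed.

Lemma LS_strict : is_strict_CDFunctor (LS M).
Proof.
split; first by split=> [A | A B E g f] /=; rewrite ?comp_idr ?ext_pure_comp.
split; first by move=> A B r s f g; rewrite KL_lc /= eta_lc.
exists erefl, (fun A B => erefl); split=> [A B | A B f] /=.
  by rewrite winv_eta_pair pair_proj comp_idr.
exact: (D_comp_linear HC _ (eta_D_linear B)).
Qed.

Lemma RS_strong : is_strong_CDFunctor (RS M).
Proof.
exists winv; split; last first.
  by move=> A B f /=; rewrite (D_comp_linear HC _ (mu_D_linear B)) S_D comp_assoc.
split; first by split=> [A | A B E g f] /=; rewrite ?mu_S_eta ?ext_ext.
split; first exact: S_terminal.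
split; last by move=> A B r s f g; rewrite KL_lc /= S_klinear mu_klinear.
by move=> A B; rewrite /Defs.omega /= !ext_eta_comp; split; [exact: omega_winv | exact: winv_omega].
Qed.

End DifferentialMonad.

Theorem mainTheorem3 (k : comPzSemiRingType) (X : CDCData k) (M : MonadData X) :
  is_CDC X -> is_CDMonad M ->
  is_CDC (Kleisli M) /\
  (forall (A B : c_ob X) (f : @c_hom k (Kleisli M) A B),
      @D_linear k (Kleisli M) A B f <-> @D_linear k X A (f_ob (m_S M) B) f) /\
  is_strict_CDFunctor (LS M) /\
  is_strong_CDFunctor (RS M).
Proof.
move=> HX HM; split; first exact: KL_CDC.
split; first exact: KL_D_linear.
by split; [exact: LS_strict | exact: RS_strong].
Qed.
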